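(* Consider the $\mathrm{GQSAT}$ instance with the following data: - three qudits of dimensions $3,2,3$; - hyperedges $\{1,2\}$ of rank $1$ and $\{2,3\}$ of rank $5$. For this instance $\mathrm{GQSAT}=1$. Consequently, for the following tensor network template $(G,c)$, one has $\mathrm{QMC}(G,c)=15$ and $\mathrm{QMF}(G,c)=14$: - two inputs $s_1,s_2$, two outputs $t_1,t_2$, two vertices $x,y$; - edges with capacities: - $s_1$–$x$, capacity $5$; - $x$–$t_1$, capacity $3$; - $x$–$y$, capacity $2$; - $s_2$–$y$, capacity $3$; - $y$–$t_2$, capacity $5$.
   Context: A tensor network template $(G,c)$ consists of a finite undirected graph $G$ with edge set $E$ whose vertex set is partitioned as $S\sqcup T\sqcup V$. Every element of $S$ (inputs) and every element of $T$ (outputs) is an open end of degree $1$; the elements of $V$ are called vertices. For $u\in S\sqcup T$, $e(u)$ denotes the edge incident to $u$. A capacity function $c:E\to\mathbb{Z}_{>0}$ is given, and to each edge $e$ one associates $\mathbb{C}^{c_e}$ with a fixed basis. At each vertex $v$ of degree $d_v$ an ordering $e(v,1),\dots,e(v,d_v)$ of the incident edge-ends is fixed. A tensor assignment $\mathcal T=(\mathcal T_v)_{v\in V}$ chooses $\mathcal T_v\in\bigotimes_{i=1}^{d_v}\mathbb{C}^{c_{e(v,i)}}$ for each $v$. Let $V_S=\bigotimes_{u\in S}\mathbb{C}^{c_{e(u)}}$ and $V_T=\bigotimes_{u\in T}\mathbb{C}^{c_{e(u)}}$. Contracting the network along all edges gives $\beta(G,c;\mathcal T)\in\mathrm{Hom}(V_S,V_T)$,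 whose matrix entries are $\langle I_T|\beta|I_S\rangle=\sum_W\prod_{v\in V}(\mathcal T_v)_{W|_v}$. Here $W$ ranges over all assignments of basis indices to all edges that agree with $I_S$ on the input edges and with $I_T$ on the output edges, and $W|_v$ is the tuple of indices on $e(v,1),\dots,e(v,d_v)$. The quantum max-flow is $\mathrm{QMF}(G,c)=\max_{\mathcal T}\operatorname{rank}\beta(G,c;\mathcal T)$. An edge cut set is a set $C\subseteq E$ for which there is a partition $S\sqcup T\sqcup V=\bar S\sqcup\bar T$ with $S\subseteq\bar S$, $T\subseteq\bar T$, and $C$ equal to the set of edges having one endpoint in $\bar S$ and the other in $\bar T$. The quantum min-cut is $\mathrm{QMC}(G,c)=\min_C\prod_{e\in C}c_e$, the minimum taken over all edge cut sets $C$. $\mathrm{GQSAT}$: an instance consists of $n$ qudits with dimensions $d_1,\dots,d_n$, a set of hyperedges $e\subseteq\{1,\dots,n\}$, and a rank $r_e$ for each hyperedge. For orthogonal projectors $\Pi_e$ of rank $r_e$ on $\bigotimes_{v\in e}\mathbb{C}^{d_v}$, set $H=\sum_e\Pi_e\otimes I_{\{1,\dots,n\}\setminus e}$ acting on $\bigotimes_{v=1}^n\mathbb{C}^{d_v}$. Then $\mathrm{GQSAT}$ of the instance is the minimum of $\dim\ker H$ over all such choices of projectors. This minimum equals the value of $\dim\ker H$ for a generic choice of projectors. *)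

From HB Require Import structures.
From mathcomp Require Import all_boot all_order all_algebra.
Set Implicit Arguments. Unset Strict Implicit. Unset Printing Implicit Defensive.
Import Order.TTheory GRing.Theory Num.Theory.
Local Open Scope ring_scope.

Record gqsat_instance := GQInst {
  gq_n : nat;
  gq_dim : 'I_gq_n -> nat;
  gq_edges : seq ({set 'I_gq_n} * nat)   (* (hyperedge e, rank r_e) *)
}.

Section GQSAT.
Variable C : numClosedFieldType.
Variable I : gqsat_instance.

(* basis indices of the full space  (x)_v C^{d_v} *)
Definition gq_full := {dffun forall v : 'I_(gq_n I), 'I_(gq_dim v)}.
(* basis indices of (x)_{v in e} C^{d_v} *)
Definition gq_loc (e : {set 'I_(gq_n I)}) :=
  {dffun forall w : {v : 'I_(gq_n I) | v \in e}, 'I_(gq_dim (val w))}.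

Definition gq_restr (e : {set 'I_(gq_n I)}) (i : gq_full) : gq_loc e :=
  [ffun w => i (val w)].

Definition gq_edge (j : 'I_(size (gq_edges I))) := nth (set0, 0%N) (gq_edges I) j.

Definition gq_choice :=
  forall j : 'I_(size (gq_edges I)), 'M[C]_(#|{: gq_loc (gq_edge j).1}|).

Definition orth_projector (m : nat) (P : 'M[C]_m) : bool :=
  (P *m P == P) && (map_mx Num.conj (P^T) == P).

Definition gq_valid (P : gq_choice) : Prop :=
  forall j, orth_projector (P j) /\ \rank (P j) = (gq_edge j).2.

(* Pi_e (x) I_{complement of e}, as a matrix on the full space *)
Definition gq_embed (e : {set 'I_(gq_n I)}) (Pe : 'M[C]_(#|{: gq_loc e}|))
  : 'M[C]_(#|{: gq_full}|) :=
  \matrix_(a, b)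
    (Pe (enum_rank (gq_restr e (enum_val a))) (enum_rank (gq_restr e (enum_val b)))
     * ([forall v, (v \notin e) ==> (enum_val a v == enum_val b v)])%:R).

Definition gq_H (P : gq_choice) : 'M[C]_(#|{: gq_full}|) :=
  \sum_j gq_embed (P j).

Definition dim_ker (m : nat) (M : 'M[C]_m) : nat := (m - \rank M)%N.

Definition GQSAT_is (k : nat) : Prop :=
  (exists P : gq_choice, gq_valid P /\ dim_ker (gq_H P) = k) /\
  (forall P : gq_choice, gq_valid P -> (k <= dim_ker (gq_H P))%N).

End GQSAT.

(* Nodes are  (S + T) + V : inputs, outputs, vertices. *)
Record tn_template := TNT {
  tS : finType; tT : finType; tV : finType; tE : finType;
  tends : tE -> ((tS + tT) + tV) * ((tS + tT) + tV);
  tcap : tE -> nat;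
  tin : tS -> tE;
  tout : tT -> tE;
  tdeg : tV -> nat;
  tord : forall v : tV, 'I_(tdeg v) -> tE
}.
Arguments tord {t} v k.

Section Template.
Variable G : tn_template.
Notation node := ((tS G + tT G) + tV G)%type.

Definition endcount (e : tE G) (x : node) : nat :=
  ((tends e).1 == x) + ((tends e).2 == x).
Definition node_deg (x : node) : nat := \sum_(e : tE G) endcount e x.

Definition template_wf : Prop :=
  [/\ forall e : tE G, (0 < tcap e)%N,
      forall u : tS G, node_deg (inl (inl u)) = 1%N /\ endcount (tin u) (inl (inl u)) = 1%N,
      forall u : tT G, node_deg (inl (inr u)) = 1%N /\ endcount (tout u) (inl (inr u)) = 1%N
    & forall (v : tV G) (e : tE G), #|[pred k | tord v k == e]| = endcount e (inr v)].

Definition IS := {dffun forall u : tS G, 'I_(tcap (tin u))}.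
Definition IT := {dffun forall u : tT G, 'I_(tcap (tout u))}.
Definition IW := {dffun forall e : tE G, 'I_(tcap e)}.
Definition Iloc (v : tV G) := {dffun forall k : 'I_(tdeg v), 'I_(tcap (tord v k))}.

Definition tensor_assignment (C : Type) := forall v : tV G, Iloc v -> C.

Definition restr_at (W : IW) (v : tV G) : Iloc v := [ffun k => W (tord v k)].

Definition beta_entry (C : numClosedFieldType) (Tn : tensor_assignment C)
  (iT : IT) (iS : IS) : C :=
  \sum_(W : IW | [forall u, W (tin u) == iS u] && [forall u, W (tout u) == iT u])
     \prod_(v : tV G) Tn v (restr_at W v).

Definition beta (C : numClosedFieldType) (Tn : tensor_assignment C)
  : 'M[C]_(#|{: IT}|, #|{: IS}|) :=
  \matrix_(i, j) beta_entry Tn (enum_val i) (enum_val j).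

Definition QMF_is (C : numClosedFieldType) (n : nat) : Prop :=
  (exists Tn : tensor_assignment C, \rank (beta Tn) = n) /\
  (forall Tn : tensor_assignment C, (\rank (beta Tn) <= n)%N).

(* cuts: partitions  node = Sbar + Tbar  with S in Sbar, T in Tbar *)
Definition cut_partition (side : {ffun node -> bool}) : bool :=
  [forall s, side (inl (inl s))] && [forall t, ~~ side (inl (inr t))].
Definition cut_edges (side : {ffun node -> bool}) : {set tE G} :=
  [set e | side (tends e).1 != side (tends e).2].
Definition cut_value (side : {ffun node -> bool}) : nat :=
  (\prod_(e in cut_edges side) tcap e)%N.

Definition QMC_is (n : nat) : Prop :=
  (exists side, cut_partition side /\ cut_value side = n) /\
  (forall side, cut_partition side -> (n <= cut_value side)%N).

End Template.

(* qudits 1,2,3 are 0,1,2; dims 3,2,3; hyperedges {1,2} rank 1, {2,3} rank 5 *)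
Definition q0 : 'I_3 := @Ordinal 3 0 isT.
Definition q1 : 'I_3 := @Ordinal 3 1 isT.
Definition q2 : 'I_3 := @Ordinal 3 2 isT.
Definition inst16 : gqsat_instance :=
  @GQInst 3 (fun v => nth 0%N [:: 3; 2; 3]%N v)
    [:: ([set q0; q1], 1%N); ([set q1; q2], 5%N)].

(* inputs s1,s2 = 0,1 ; outputs t1,t2 = 0,1 ; vertices x,y = 0,1 ;
   edges 0: s1-x (5), 1: x-t1 (3), 2: x-y (2), 3: s2-y (3), 4: y-t2 (5) *)
Definition i0 : 'I_2 := @Ordinal 2 0 isT.
Definition i1 : 'I_2 := @Ordinal 2 1 isT.
Definition node16 := (('I_2 + 'I_2) + 'I_2)%type.
Definition s1 : node16 := inl (inl i0).
Definition s2 : node16 := inl (inl i1).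
Definition t1 : node16 := inl (inr i0).
Definition t2 : node16 := inl (inr i1).
Definition vx : node16 := inr i0.
Definition vy : node16 := inr i1.
Definition e0 : 'I_5 := @Ordinal 5 0 isT.
Definition e1 : 'I_5 := @Ordinal 5 1 isT.
Definition e2 : 'I_5 := @Ordinal 5 2 isT.
Definition e3 : 'I_5 := @Ordinal 5 3 isT.
Definition e4 : 'I_5 := @Ordinal 5 4 isT.

Definition ends16 (e : 'I_5) : node16 * node16 :=
  nth (vx, vx) [:: (s1, vx); (vx, t1); (vx, vy); (s2, vy); (vy, t2)] e.

Definition G16 : tn_template :=
  @TNT 'I_2 'I_2 'I_2 'I_5
    ends16
    (fun e => nth 1%N [:: 5; 3; 2; 3; 5]%N e)
    (fun u => nth e0 [:: e0; e3] u)
    (fun u => nth e0 [:: e1; e4] u)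
    (fun _ => 3%N)
    (fun v k => nth e0 (nth [::] [:: [:: e0; e1; e2]; [:: e2; e3; e4]] v) k).

(* The upper bounds are two dual dimension counts, the lower bounds explicit witnesses.
   Contracting the network along the inner edge x-y factors beta^T through the
   18-dimensional space C^3 (x) C^2 (x) C^3 of the edges x-t1, x-y, y-s2.  As 6 > 5 some
   nonzero phi in C^3 (x) C^2 annihilates the five slices of T_x, so phi (x) I_3, of rank 3,
   kills the left factor; choosing alpha in C^3 orthogonal to the two slices of phi and psi
   in C^2 (x) C^3 annihilating the slices of T_y, the vector alpha (x) psi lies in the kernels
   of phi (x) I_3 and of the right factor, whence rank beta <= 18 - 3 - 1 = 14.
   Dually, if Pi_12 has rank 1 and Pi_23 rank 5, then alpha (x) psi is in the kernel of H as
   soon as psi lies in the kernel of Pi_23 and alpha is orthogonal to the two slices of the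
   range of Pi_12.  The bounds are attained by an explicit tensor assignment and by
   Pi_12 = |Phi><Phi|, Pi_23 = 1 - |Phi><Phi| with Phi = (|00> + |11>)/sqrt 2, whose
   Hamiltonian has kernel spanned by |2> Phi.  The minimal cut is found by enumeration. *)

From HB Require Import structures.
From mathcomp Require Import all_boot all_order all_algebra.
From mathcomp Require Import ring zify.
Set Implicit Arguments. Unset Strict Implicit. Unset Printing Implicit Defensive.
Import Order.TTheory GRing.Theory Num.Theory.
Local Open Scope ring_scope.

Lemma sum_pair (R : nmodType) (A B : finType) (G : A * B -> R) :
  \sum_m G m = \sum_a \sum_b G (a, b).
Proof. by rewrite pair_bigA; apply: eq_bigr => -[]. Qed.

Lemma sum_triple (R : nmodType) (A B D : finType) (G : A * B * D -> R) :
  \sum_m G m = \sum_a \sum_b \sum_d G (a, b, d).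
Proof. by rewrite !sum_pair. Qed.

Section FunMatrix.
Variable F : fieldType.
Implicit Types A B D : finType.

Lemma sum_delta_r A (G : A -> F) c : \sum_a G a * (a == c)%:R = G c.
Proof.
by rewrite (bigD1 c) //= eqxx mulr1 big1 ?addr0 // => a /negbTE ->; rewrite mulr0.
Qed.

Lemma sum_delta_l A (G : A -> F) c : \sum_a (c == a)%:R * G a = G c.
Proof. by rewrite -(sum_delta_r G); apply: eq_bigr => a _; rewrite mulrC eq_sym. Qed.

Definition fun_mx A B (f : A -> B -> F) : 'M[F]_(#|A|, #|B|) :=
  \matrix_(i, j) f (enum_val i) (enum_val j).
Definition fun_rv A (g : A -> F) : 'rV[F]_#|A| := \row_i g (enum_val i).

Lemma fun_mxE A B (f : A -> B -> F) a b :
  fun_mx f (enum_rank a) (enum_rank b) = f a b.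
Proof. by rewrite mxE !enum_rankK. Qed.

Lemma fun_rvE A (g : A -> F) a : fun_rv g 0 (enum_rank a) = g a.
Proof. by rewrite mxE enum_rankK. Qed.

Lemma fun_mx_enum_rank A B (M : 'M[F]_(#|A|, #|B|)) :
  fun_mx (fun a b => M (enum_rank a) (enum_rank b)) = M.
Proof. by apply/matrixP => i j; rewrite mxE !enum_valK. Qed.

Lemma fun_rv_row A (u : 'rV[F]_#|A|) : u = fun_rv (fun a => u 0 (enum_rank a)).
Proof. by apply/rowP => i; rewrite mxE enum_valK. Qed.

Lemma eq_fun_mx A B (f g : A -> B -> F) : f =2 g -> fun_mx f = fun_mx g.
Proof. by move=> fg; apply/matrixP => i j; rewrite !mxE fg. Qed.

Lemma sum_enum_val A (G : A -> F) : \sum_(i < #|A|) G (enum_val i) = \sum_a G a.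
Proof. by rewrite [RHS](reindex (fun i : 'I_#|A| => enum_val i)) //; apply: onW_bij; exact: enum_val_bij. Qed.

Lemma mul_fun_mx A B D (f : A -> B -> F) (g : B -> D -> F) :
  fun_mx f *m fun_mx g = fun_mx (fun a d => \sum_b f a b * g b d).
Proof.
apply/matrixP => i j; rewrite !mxE -[RHS]sum_enum_val.
by apply: eq_bigr => k _; rewrite !mxE.
Qed.

Lemma mul_fun_rv_mx A B (g : A -> F) (f : A -> B -> F) :
  fun_rv g *m fun_mx f = fun_rv (fun b => \sum_a g a * f a b).
Proof.
apply/rowP => j; rewrite !mxE -[RHS]sum_enum_val.
by apply: eq_bigr => k _; rewrite !mxE.
Qed.

Lemma tr_fun_mx A B (f : A -> B -> F) : (fun_mx f)^T = fun_mx (fun b a => f a b).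
Proof. by apply/matrixP => i j; rewrite !mxE. Qed.

Lemma fun_mx1 A : fun_mx (fun a b : A => (a == b)%:R) = 1%:M.
Proof. by apply/matrixP => i j; rewrite !mxE (inj_eq enum_val_inj). Qed.

Lemma fun_mx0 A B (f : A -> B -> F) : (forall a b, f a b = 0) -> fun_mx f = 0.
Proof. by move=> f0; apply/matrixP => i j; rewrite !mxE f0. Qed.

Lemma fun_rv0 A (g : A -> F) : (forall a, g a = 0) -> fun_rv g = 0.
Proof. by move=> g0; apply/rowP => i; rewrite !mxE g0. Qed.

Lemma fun_rv_eq0 A (g : A -> F) : (fun_rv g == 0) = [forall a, g a == 0].
Proof.
apply/eqP/forallP => [g0 a | g0]; last by apply/rowP => i; rewrite !mxE; apply/eqP.
by rewrite -fun_rvE g0 mxE.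
Qed.

Lemma left_kernel_fun_mx A B (f : A -> B -> F) : (\rank (fun_mx f) < #|A|)%N ->
  exists2 g : A -> F, exists a, g a != 0 & forall b, \sum_a g a * f a b = 0.
Proof.
rewrite -subn_gt0 -mxrank_ker lt0n mxrank_eq0 => /rowV0Pn[u /sub_kermxP uf u0].
exists (fun a => u 0 (enum_rank a)).
  by move: u0; rewrite {1}[u]fun_rv_row fun_rv_eq0 negb_forall => /existsP[a ua]; exists a.
by move=> b; move/rowP/(_ (enum_rank b)): uf; rewrite {1}[u]fun_rv_row mul_fun_rv_mx !mxE enum_rankK.
Qed.

Lemma left_kernel_fun_mx_card A B (f : A -> B -> F) : (#|B| < #|A|)%N ->
  exists2 g : A -> F, exists a, g a != 0 & forall b, \sum_a g a * f a b = 0.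
Proof. by move=> BA; apply/left_kernel_fun_mx/(leq_ltn_trans (rank_leq_col _)). Qed.

Lemma rank_fun_mx_lt A B (f : A -> B -> F) (g : A -> F) a0 :
  g a0 != 0 -> (forall b, \sum_a g a * f a b = 0) -> (\rank (fun_mx f) < #|A|)%N.
Proof.
move=> ga0 gf; rewrite -subn_gt0 -mxrank_ker lt0n mxrank_eq0; apply/rowV0Pn.
exists (fun_rv g); last by rewrite fun_rv_eq0 negb_forall; apply/existsP; exists a0.
by apply/sub_kermxP; rewrite mul_fun_rv_mx; apply/eqP; rewrite fun_rv_eq0; apply/forallP => b; rewrite gf.
Qed.

Lemma rank_fun_mx_ge A B (f : A -> B -> F) (w : A -> F) :
  (forall g : A -> F, (forall b, \sum_a g a * f a b = 0) -> exists c, forall a, g a = c * w a) ->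
  (#|A| - 1 <= \rank (fun_mx f))%N.
Proof.
move=> kerf; have : (kermx (fun_mx f) <= fun_rv w)%MS.
  apply/row_subP => i; set u := row i _.
  have /rowP uf : u *m fun_mx f = 0 by rewrite -row_mul mulmx_ker row0.
  have [c gw] : exists c, forall a, u 0 (enum_rank a) = c * w a.
    apply: kerf => b; move: (uf (enum_rank b)).
    by rewrite {1}[u]fun_rv_row mul_fun_rv_mx !mxE enum_rankK.
  apply/submxP; exists (c%:M); apply/rowP => j.
  by rewrite mul_scalar_mx 2![in RHS]mxE -gw enum_valK.
move/mxrankS; rewrite mxrank_ker; have := rank_leq_row (fun_rv w); lia.
Qed.

Lemma rank_fun_mx_comp A A' B B' (f : A -> B -> F) (h : A' -> A) (k : B' -> B) :
  (\rank (fun_mx (fun a b => f (h a) (k b))) <= \rank (fun_mx f))%N.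
Proof.
pose Eh := fun_mx (fun a' a => (h a' == a)%:R : F).
pose Ek := fun_mx (fun b b' => (b == k b')%:R : F).
suff -> : fun_mx (fun a b => f (h a) (k b)) = Eh *m fun_mx f *m Ek.
  by apply: leq_trans (mxrankM_maxl _ _) _; exact: mxrankM_maxr.
rewrite !mul_fun_mx; apply: eq_fun_mx => a' b'.
by rewrite sum_delta_r sum_delta_l.
Qed.

Lemma rank_fun_mx_tensor1 A B (phi : A -> F) a0 : phi a0 != 0 ->
  \rank (fun_mx (fun (m : A * B) b => phi m.1 * (m.2 == b)%:R)) = #|B|.
Proof.
move=> phi0; apply/eqP; rewrite eqn_leq rank_leq_col /=.
apply: leq_trans (rank_fun_mx_comp _ (pair a0) id).
rewrite -{1}(mxrank1 F #|B|) -(mxrank_scale_nz _ phi0) -fun_mx1; apply: eq_leq.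
by congr (\rank _); apply/matrixP => i j; rewrite !mxE.
Qed.

End FunMatrix.

Lemma mxrank_mul_lt_ker (F : fieldType) m n p q (X : 'M[F]_(p, m)) (Y : 'M_(m, n))
    (K : 'M_(m, q)) (v : 'rV_m) :
  X *m K = 0 -> v != 0 -> v *m K = 0 -> v *m Y = 0 -> (\rank (X *m Y) < m - \rank K)%N.
Proof.
move=> XK v0 vK vY.
have XYle : (\rank (X *m Y) <= \rank (kermx K *m Y))%N.
  by apply/mxrankS/submxMr/sub_kermxP.
have cap_gt0 : (0 < \rank (kermx K :&: kermx Y))%N.
  rewrite lt0n mxrank_eq0; apply/rowV0Pn; exists v => //.
  by rewrite sub_capmx; apply/andP; split; apply/sub_kermxP.
have := mxrank_mul_ker (kermx K) Y; rewrite mxrank_ker; lia.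
Qed.

Lemma mxrank_compl_idem (F : fieldType) n (P : 'M[F]_n) :
  P *m P = P -> \rank (1%:M - P) = (n - \rank P)%N.
Proof.
move=> PP; have PQ : P *m (1%:M - P) = 0 by rewrite mulmxBr mulmx1 PP subrr.
have /mxrankS : (P <= kermx (1%:M - P))%MS by apply/sub_kermxP.
have := rank_leq_row (1%:M - P).
have := mxrank_add P (1%:M - P); rewrite addrC subrK mxrank1 mxrank_ker; lia.
Qed.

Section NatPoints.
Variables (I : finType) (n : I -> nat).
Hypothesis n_gt0 : forall i, (0 < n i)%N.

(* Values out of range are replaced by 0. *)
Definition dffun_of_nats (f : I -> nat) : {dffun forall i, 'I_(n i)} :=
  [ffun i => insubd (Ordinal (n_gt0 i)) (f i)].

Lemma dffun_of_natsE (f : I -> nat) i : (f i < n i)%N -> val (dffun_of_nats f i) = f i.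
Proof. by move=> fi; rewrite ffunE val_insubd fi. Qed.

Lemma dffun_of_natsK (f : I -> nat) (x : {dffun forall i, 'I_(n i)}) :
  (forall i, f i = x i) -> dffun_of_nats f = x.
Proof. by move=> fx; apply/ffunP => i; apply: val_inj; rewrite dffun_of_natsE fx ?ltn_ord. Qed.

End NatPoints.

Section Projectors.
Variable C : numClosedFieldType.

Lemma orth_projector_compl n (P : 'M[C]_n) :
  orth_projector P -> orth_projector (1%:M - P).
Proof.
case/andP => /eqP PP /eqP Pherm; apply/andP; split; apply/eqP.
  by rewrite mulmxBl !mulmxBr !mul1mx mulmx1 PP subrr subr0.
by rewrite linearB /= map_mxB trmx1 map_mx1 Pherm.
Qed.

Definition line_projector (A : finType) (u : A -> C) : 'M[C]_#|A| :=
  fun_mx (fun a b => u a * (u b)^* / \sum_c u c * (u c)^*).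

Lemma line_projector_orth (A : finType) (u : A -> C) : orth_projector (line_projector u).
Proof.
set N := \sum_c u c * (u c)^*.
have Nreal : N^* = N.
  by apply/conj_Creal/ger0_real/sumr_ge0 => c _; exact: mul_conjC_ge0.
apply/andP; split; apply/eqP.
  rewrite mul_fun_mx; apply: eq_fun_mx => a b.
  transitivity (u a * (u b)^* / N * ((\sum_c u c * (u c)^*) / N)).
    by rewrite mulr_suml big_distrr; apply: eq_bigr => c _ /=; ring.
  by rewrite -/N; have [->|N0] := eqVneq N 0; rewrite ?invr0 ?mulr0 // mulfV // mulr1.
by apply/matrixP => i j; rewrite !mxE -/N !rmorphM fmorphV /= Nreal conjCK [(u _)^* * _]mulrC.
Qed.

Lemma rank_line_projector (A : finType) (u : A -> C) a0 :
  u a0 != 0 -> \rank (line_projector u) = 1%N.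
Proof.
move=> ua0; set N := \sum_c u c * (u c)^*.
have N_gt0 : 0 < N.
  rewrite /N (bigD1 a0) //= ltr_wpDr ?sumr_ge0 ?mul_conjC_gt0 // => c _.
  exact: mul_conjC_ge0.
apply/eqP; rewrite eqn_leq; apply/andP; split.
  have -> : line_projector u =
      fun_mx (fun a (_ : 'I_1) => u a) *m fun_mx (fun (_ : 'I_1) b => (u b)^* / N).
    by rewrite mul_fun_mx; apply: eq_fun_mx => a b; rewrite big_ord1 mulrA.
  by apply: leq_trans (mxrankM_maxl _ _) _; rewrite (leq_trans (rank_leq_col _)) ?card_ord.
rewrite lt0n mxrank_eq0; apply/eqP => /matrixP/(_ (enum_rank a0) (enum_rank a0)).
rewrite fun_mxE mxE => /eqP; rewrite mulf_eq0 invr_eq0 mul_conjC_eq0 (negbTE ua0) /=.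
by rewrite gt_eqF.
Qed.

End Projectors.

Lemma G16_wf : template_wf G16.
Proof.
split.
- by case=> [[|[|[|[|[|]]]]] ].
- by case=> [[|[|]]] // ?; split; rewrite /node_deg /= ?(big_ord_recl, big_ord0).
- by case=> [[|[|]]] // ?; split; rewrite /node_deg /= ?(big_ord_recl, big_ord0).
- case=> [[|[|]]] // ? [[|[|[|[|[|]]]]] ] // ?; rewrite /endcount /=.
  all: by rewrite -sum1_card big_mkcond /= !big_ord_recl big_ord0.
Qed.

Lemma G16_min_cut : QMC_is G16 15.
Proof.
split.
- exists [ffun x : node16 => if x is inl (inr _) then false else true].
  split; first by apply/andP; split; apply/forallP => x; rewrite ffunE.
  by rewrite /cut_value big_mkcond /= !big_ord_recl big_ord0 !inE /= !ffunE.
- move=> side /andP[/forallP sS /forallP sT].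
  rewrite /cut_value big_mkcond /= !big_ord_recl big_ord0 !inE /=.
  rewrite (sS i0) (sS i1) (negbTE (sT i0)) (negbTE (sT i1)).
  by case: (side vx); case: (side vy).
Qed.

Lemma cap16_gt0 (e : 'I_5) : (0 < @tcap G16 e)%N.
Proof. by case: e => [[|[|[|[|[|]]]]] ]. Qed.

Definition edges16 (s : seq nat) : IW G16 := dffun_of_nats cap16_gt0 (fun e => nth 0%N s e).

Lemma edges16E (s : seq nat) (e : 'I_5) : (nth 0%N s e < @tcap G16 e)%N -> val (edges16 s e) = nth 0%N s e.
Proof. exact: dffun_of_natsE. Qed.

Section Contraction.
Variables (C : numClosedFieldType) (Tn : tensor_assignment G16 C).

(* The slices of T_x and T_y; the values on the edges not incident to the vertex are dummies. *)
Definition tensor_x (s : 'I_5) (a : 'I_3) (k : 'I_2) : C :=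
  Tn (restr_at (edges16 [:: s : nat; a : nat; k : nat; 0; 0]%N) i0).
Definition tensor_y (k : 'I_2) (b : 'I_3) (c : 'I_5) : C :=
  Tn (restr_at (edges16 [:: 0; 0; k : nat; b : nat; c : nat]%N) i1).

Lemma beta_entry16 (t : IT G16) (s : IS G16) :
  beta_entry Tn t s = \sum_(k < 2) tensor_x (s i0) (t i0) k * tensor_y k (s i1) (t i1).
Proof.
pose ws (k : 'I_2) := [:: s i0 : nat; t i0 : nat; k : nat; s i1 : nat; t i1 : nat].
have wsE k e : val (edges16 (ws k) e) = nth 0%N (ws k) e.
  by rewrite edges16E //; case: e => [[|[|[|[|[|]]]]] ] //= _; exact: ltn_ord.
pose mid (W : IW G16) : 'I_2 := W e2.
rewrite /beta_entry (reindex_onto (fun k => edges16 (ws k)) mid).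
  apply: eq_big => k.
    apply/andP; split; last by apply/eqP/val_inj; exact: wsE.
    apply/andP; split; apply/forallP => -[[|[|]]] // u; apply/eqP/val_inj;
      by rewrite (bool_irrelevance u isT); exact: wsE.
  move=> _; rewrite big_ord_recl big_ord1.
  have -> : ord0 = i0 by apply: val_inj.
  have -> : lift i0 ord0 = i1 by apply: val_inj.
  by congr (_ * _); congr (Tn _); apply/ffunP => -[[|[|[|]]] //= j];
    apply: val_inj; rewrite !ffunE !val_insubd /= ?ltn_ord.
move=> W /andP[/forallP WS /forallP WT].
apply/ffunP => -[[|[|[|[|[|]]]]] ] // e; rewrite (bool_irrelevance e isT);
  apply: val_inj; rewrite wsE //=.
- by move/eqP: (WS i0) => <-.
- by move/eqP: (WT i0) => <-.
- by move/eqP: (WS i1) => <-.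
- by move/eqP: (WT i1) => <-.
Qed.

Local Notation Tx := tensor_x.
Local Notation Ty := tensor_y.
Local Notation mid := ('I_3 * 'I_2 * 'I_3)%type.

Lemma tr_beta16 : (beta Tn)^T =
  fun_mx (fun (s : IS G16) (m : mid) => Tx (s i0) m.1.1 m.1.2 * (m.2 == s i1 :> 'I_3)%:R) *m
  fun_mx (fun (m : mid) (t : IT G16) => (t i0 == m.1.1 :> 'I_3)%:R * Ty m.1.2 m.2 (t i1)).
Proof.
rewrite [beta Tn]/(fun_mx _) tr_fun_mx mul_fun_mx; apply: eq_fun_mx => s t.
rewrite beta_entry16 sum_triple.
transitivity (\sum_a (t i0 == a :> 'I_3)%:R *
  \sum_k \sum_b (Tx (s i0) a k * Ty k b (t i1)) * (b == s i1 :> 'I_3)%:R).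
  by rewrite sum_delta_l; apply: eq_bigr => k _; rewrite sum_delta_r.
apply: eq_bigr => a _; rewrite big_distrr; apply: eq_bigr => k _.
by rewrite big_distrr; apply: eq_bigr => b _ /=; ring.
Qed.

Lemma rank_beta16_le : (\rank (beta Tn) <= 14)%N.
Proof.
have [phi [ak0 phi0] phiX] := left_kernel_fun_mx_card
  (fun (ak : 'I_3 * 'I_2) (s : 'I_5) => Tx s ak.1 ak.2) ltac:(by rewrite card_prod !card_ord).
have [alpha [a0 alpha0] alphaphi] := left_kernel_fun_mx_card
  (fun (a : 'I_3) (k : 'I_2) => phi (a, k)) ltac:(by rewrite !card_ord).
have [psi [kb0 psi0] psiY] := left_kernel_fun_mx_card
  (fun (kb : 'I_2 * 'I_3) (c : 'I_5) => Ty kb.1 kb.2 c) ltac:(by rewrite card_prod !card_ord).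
pose Phi := fun_mx (fun (m : mid) (c : 'I_3) => phi m.1 * (m.2 == c)%:R).
pose v := fun_rv (fun m : mid => alpha m.1.1 * psi (m.1.2, m.2)).
rewrite -mxrank_tr tr_beta16; set L := fun_mx _; set R := fun_mx _.
suff : (\rank (L *m R) < #|{: mid}| - \rank Phi)%N.
  rewrite (rank_fun_mx_tensor1 _ phi0); move: (\rank _) => r.
  by rewrite !card_prod !card_ord; lia.
apply: (mxrank_mul_lt_ker (K := Phi) (v := v)).
- rewrite /L /Phi mul_fun_mx; apply: fun_mx0 => s c; rewrite sum_pair.
  transitivity (\sum_ak \sum_b (phi ak * Tx (s i0) ak.1 ak.2 * (b == c)%:R) * (b == s i1 :> 'I_3)%:R).
    by apply: eq_bigr => ak _; apply: eq_bigr => b _; ring.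
  by under eq_bigr do rewrite sum_delta_r; rewrite -mulr_suml phiX mul0r.
- rewrite /v fun_rv_eq0 negb_forall; apply/existsP; exists (a0, kb0.1, kb0.2).
  by rewrite /= -surjective_pairing mulf_neq0.
- rewrite /v /Phi mul_fun_rv_mx; apply: fun_rv0 => c; rewrite sum_triple.
  transitivity (\sum_a \sum_k \sum_b (alpha a * phi (a, k) * psi (k, b)) * (b == c)%:R).
    by do 3!(apply: eq_bigr => ? _); rewrite /=; ring.
  under eq_bigr do under eq_bigr do rewrite sum_delta_r.
  rewrite exchange_big /=; apply: big1 => k _.
  by rewrite -mulr_suml alphaphi mul0r.
- rewrite /v /R mul_fun_rv_mx; apply: fun_rv0 => t; rewrite sum_triple.
  transitivity (\sum_a (t i0 == a :> 'I_3)%:R * (alpha a * \sum_kb psi kb * Ty kb.1 kb.2 (t i1))).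
    apply: eq_bigr => a _; rewrite sum_pair big_distrr big_distrr; apply: eq_bigr => k _.
    by rewrite big_distrr big_distrr; apply: eq_bigr => b _ /=; ring.
  by rewrite sum_delta_l psiY mulr0.
Qed.

End Contraction.

Lemma cap16_out_gt0 (u : tT G16) : (0 < tcap (tout u))%N.
Proof. exact: cap16_gt0. Qed.
Lemma cap16_in_gt0 (u : tS G16) : (0 < tcap (tin u))%N.
Proof. exact: cap16_gt0. Qed.

Definition out16 (a b : nat) : IT G16 := dffun_of_nats cap16_out_gt0 (fun u => nth 0%N [:: a; b] u).
Definition in16 (a b : nat) : IS G16 := dffun_of_nats cap16_in_gt0 (fun u => nth 0%N [:: a; b] u).

Lemma out16E0 a b : (a < 3)%N -> (out16 a b i0 : 'I_3) = a :> nat.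
Proof. by move=> lt; have := @dffun_of_natsE _ _ cap16_out_gt0 (fun u => nth 0%N [:: a; b] u) i0 lt. Qed.
Lemma out16E1 a b : (b < 5)%N -> (out16 a b i1 : 'I_5) = b :> nat.
Proof. by move=> lt; have := @dffun_of_natsE _ _ cap16_out_gt0 (fun u => nth 0%N [:: a; b] u) i1 lt. Qed.
Lemma in16E0 a b : (a < 5)%N -> (in16 a b i0 : 'I_5) = a :> nat.
Proof. by move=> lt; have := @dffun_of_natsE _ _ cap16_in_gt0 (fun u => nth 0%N [:: a; b] u) i0 lt. Qed.
Lemma in16E1 a b : (b < 3)%N -> (in16 a b i1 : 'I_3) = b :> nat.
Proof. by move=> lt; have := @dffun_of_natsE _ _ cap16_in_gt0 (fun u => nth 0%N [:: a; b] u) i1 lt. Qed.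

Lemma out16_bij : bijective (fun p : 'I_3 * 'I_5 => out16 p.1 p.2).
Proof.
exists (fun t : IT G16 => (t i0 : 'I_3, t i1 : 'I_5)) => [[a b] | t].
  by congr pair; apply: val_inj; [exact: out16E0 | exact: out16E1].
rewrite /=; apply: (dffun_of_natsK cap16_out_gt0) => -[[|[|]] //= u];
  by rewrite (bool_irrelevance u isT).
Qed.

Local Ltac expand_sums := rewrite unlock /= ?(mul0r, mulr0, mul1r, mulr1, mulrN1, mulN1r,
  mulrN, addr0, add0r, subr0, sub0r, oppr0, opprK).

Section QMFWitness.
Variable C : numClosedFieldType.

Definition witness_x (s a k : nat) : C :=
  match s, a, k with
  | 0, 1, 0 | 0, 0, 1 | 1, 2, 1 | 2, 1, 1 | 4, 2, 0 => 1
  | 3, 0, 0 => -1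
  | _, _, _ => 0
  end.
Definition witness_y (k b c : nat) : C :=
  match k, b, c with
  | 0, 0, 0 | 0, 0, 4 | 1, 1, 2 => 1
  | 0, 1, 4 | 0, 2, 2 | 1, 0, 3 | 1, 1, 1 | 1, 2, 4 => -1
  | _, _, _ => 0
  end.

Definition witness_tensor : tensor_assignment G16 C := fun v (l : Iloc v) =>
  let f := if val v == 0%N then witness_x else witness_y in
  f (l (@Ordinal 3 0 isT)) (l (@Ordinal 3 1 isT)) (l (@Ordinal 3 2 isT)).

Lemma tensor_x_witness s a k : tensor_x witness_tensor s a k = witness_x s a k.
Proof. by rewrite /tensor_x /witness_tensor /= !ffunE !val_insubd /= !ltn_ord. Qed.

Lemma tensor_y_witness k b c : tensor_y witness_tensor k b c = witness_y k b c.
Proof. by rewrite /tensor_y /witness_tensor /= !ffunE !val_insubd /= !ltn_ord. Qed.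

Lemma beta_entry_witness a b c d : (a < 3)%N -> (b < 5)%N -> (c < 5)%N -> (d < 3)%N ->
  beta_entry witness_tensor (out16 a b) (in16 c d) =
    witness_x c a 0 * witness_y 0 d b + witness_x c a 1 * witness_y 1 d b.
Proof.
move=> ha hb hc hd; rewrite beta_entry16 big_ord_recl big_ord1 !tensor_x_witness !tensor_y_witness /=.
by rewrite in16E0 // in16E1 // out16E0 // out16E1.
Qed.

Lemma sum_out16 (G : IT G16 -> C) :
  \sum_t G t = \sum_(0 <= a < 3) \sum_(0 <= b < 5) G (out16 a b).
Proof.
rewrite (reindex _ (onW_bij _ out16_bij)) sum_pair big_mkord.
by apply: eq_bigr => a _; rewrite big_mkord.
Qed.

Lemma witness_tensor_column (g : IT G16 -> C) :
  (forall s, \sum_t g t * beta_entry witness_tensor t s = 0) ->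
  forall c d, (c < 5)%N -> (d < 3)%N -> \sum_(0 <= a < 3) \sum_(0 <= b < 5)
    g (out16 a b) * (witness_x c a 0 * witness_y 0 d b + witness_x c a 1 * witness_y 1 d b) = 0.
Proof.
move=> H c d hc hd; rewrite -[RHS](H (in16 c d)) sum_out16.
by apply: eq_big_nat => a /= ha; apply: eq_big_nat => b hb; rewrite beta_entry_witness.
Qed.

Lemma witness_tensor_left_kernel (g : IT G16 -> C) :
  (forall s, \sum_t g t * beta_entry witness_tensor t s = 0) ->
  forall t, g t = g (out16 0 3) *
    (((t i0 : nat), (t i1 : nat)) \in [:: (0, 3); (1, 0)]%N)%:R.
Proof.
move/witness_tensor_column => col.
have oppr0_eq (x : C) : - x = 0 -> x = 0 by move=> nx; rewrite -[x]opprK nx oppr0.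
have g24 : g (out16 2 4) = 0 by apply: oppr0_eq; have := col 4 1 isT isT; expand_sums.
have g22 : g (out16 2 2) = 0 by apply: oppr0_eq; have := col 4 2 isT isT; expand_sums.
have g23 : g (out16 2 3) = 0 by apply: oppr0_eq; have := col 1 0 isT isT; expand_sums.
have g13 : g (out16 1 3) = 0 by apply: oppr0_eq; have := col 2 0 isT isT; expand_sums.
have g14 : g (out16 1 4) = 0 by apply: oppr0_eq; have := col 2 2 isT isT; expand_sums.
have g04 : g (out16 0 4) = 0 by have := col 3 1 isT isT; expand_sums.
have g02 : g (out16 0 2) = 0 by have := col 3 2 isT isT; expand_sums.
have g20 : g (out16 2 0) = 0 by have := col 4 0 isT isT; expand_sums; rewrite g24 addr0.
have g21 : g (out16 2 1) = 0.
  by apply: oppr0_eq; have := col 1 1 isT isT; expand_sums; rewrite g22 addr0.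
have g00 : g (out16 0 0) = 0.
  by apply: oppr0_eq; have := col 3 0 isT isT; expand_sums; rewrite g04 subr0.
have g12 : g (out16 1 2) = 0.
  by apply: oppr0_eq; have := col 0 2 isT isT; expand_sums; rewrite g04 oppr0 add0r.
have g11 : g (out16 1 1) = 0.
  by apply: oppr0_eq; have := col 2 1 isT isT; expand_sums; rewrite g12 addr0.
have g01 : g (out16 0 1) = 0.
  by apply: oppr0_eq; have := col 0 1 isT isT; expand_sums; rewrite g02 g14 addr0 subr0.
have g10 : g (out16 1 0) = g (out16 0 3).
  by have := col 0 0 isT isT; expand_sums; rewrite g14 addr0 addrC => /eqP; rewrite subr_eq0 => /eqP.
case: out16_bij => p out16K pK t; rewrite -[t]pK; case: (p t) => -[a ha] [b hb] /=.
rewrite out16E0 // out16E1 //.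
by case: a ha => [|[|[|]]] // ? ; case: b hb => [|[|[|[|[|]]]]] // ?;
  rewrite /= ?(mulr1, mulr0, g00, g01, g02, g04, g10, g11, g12, g13, g14, g20, g21, g22, g23, g24).
Qed.

Lemma rank_beta16_witness_tensor : \rank (beta witness_tensor) = 14%N.
Proof.
apply/eqP; rewrite eqn_leq rank_beta16_le /=.
have cardIT : #|{: IT G16}| = 15%N by rewrite -(bij_eq_card out16_bij) card_prod !card_ord.
apply: leq_trans (rank_fun_mx_ge (f := beta_entry witness_tensor)
  (w := fun t => (((t i0 : nat), (t i1 : nat)) \in [:: (0, 3); (1, 0)]%N)%:R) _).
  by rewrite cardIT.
by move=> g /witness_tensor_left_kernel; exists (g (out16 0 3)).
Qed.

End QMFWitness.

Lemma eq_gq_restr (I : gqsat_instance) (e : {set 'I_(gq_n I)}) (x y : gq_full I) :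
  (forall v, v \in e -> x v = y v :> nat) -> gq_restr e x = gq_restr e y.
Proof. by move=> xy; apply/ffunP => w; rewrite !ffunE; apply/val_inj/xy/(valP w). Qed.

Local Notation E1 := [set q0; q1].
Local Notation E2 := [set q1; q2].
Local Notation full16 := (gq_full inst16).
Local Notation loc1 := (gq_loc (I := inst16) E1).
Local Notation loc2 := (gq_loc (I := inst16) E2).
Local Notation restr1 := (gq_restr (I := inst16) E1).
Local Notation restr2 := (gq_restr (I := inst16) E2).

Lemma dim16_gt0 (v : 'I_3) : (0 < gq_dim (g := inst16) v)%N.
Proof. by case: v => [[|[|[|]]]]. Qed.

Definition point16 (a b c : nat) : full16 :=
  dffun_of_nats dim16_gt0 (fun v => nth 0%N [:: a; b; c] v).

Lemma point16E a b c v : (a < 3)%N -> (b < 2)%N -> (c < 3)%N ->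
  point16 a b c v = nth 0%N [:: a; b; c] v :> nat.
Proof. by move=> ha hb hc; rewrite dffun_of_natsE //; case: v => [[|[|[|]]]]. Qed.

Lemma point16_bij : bijective (fun p : 'I_3 * 'I_2 * 'I_3 => point16 p.1.1 p.1.2 p.2).
Proof.
exists (fun x : full16 => (x q0 : 'I_3, x q1 : 'I_2, x q2 : 'I_3)) => [[[a b] c] | x].
  congr (_, _, _); apply: ord_inj.
  - by rewrite (point16E q0) ?ltn_ord.
  - by rewrite (point16E q1) ?ltn_ord.
  - by rewrite (point16E q2) ?ltn_ord.
rewrite /=; apply: (dffun_of_natsK dim16_gt0) => -[[|[|[|]]] //= v];
  by rewrite (bool_irrelevance v isT).
Qed.

Definition point1 (a b : nat) : loc1 := restr1 (point16 a b 0).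
Definition point2 (b c : nat) : loc2 := restr2 (point16 0 b c).

Lemma restr_point16_1 a b c : (a < 3)%N -> (b < 2)%N -> (c < 3)%N ->
  restr1 (point16 a b c) = point1 a b.
Proof.
move=> ha hb hc; apply: eq_gq_restr => v; rewrite !point16E // !inE -!val_eqE.
by case: v => [[|[|[|]]]].
Qed.

Lemma restr_point16_2 a b c : (a < 3)%N -> (b < 2)%N -> (c < 3)%N ->
  restr2 (point16 a b c) = point2 b c.
Proof.
move=> ha hb hc; apply: eq_gq_restr => v; rewrite !point16E // !inE -!val_eqE.
by case: v => [[|[|[|]]]].
Qed.

Lemma q0_E1 : q0 \in E1. Proof. by rewrite !inE eqxx. Qed.
Lemma q1_E1 : q1 \in E1. Proof. by rewrite !inE eqxx orbT. Qed.
Lemma q1_E2 : q1 \in E2. Proof. by rewrite !inE eqxx. Qed.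
Lemma q2_E2 : q2 \in E2. Proof. by rewrite !inE eqxx orbT. Qed.

Lemma point1_bij : bijective (fun p : 'I_3 * 'I_2 => point1 p.1 p.2).
Proof.
exists (fun z : loc1 => (z (exist _ q0 q0_E1) : 'I_3, z (exist _ q1 q1_E1) : 'I_2)).
  move=> [a b]; congr pair; apply: ord_inj; rewrite ffunE.
    by rewrite (point16E q0) ?ltn_ord.
  by rewrite (point16E q1) ?ltn_ord.
move=> z; apply/ffunP => -[[[|[|[|]]] u] uE].
- have -> : exist (fun v => v \in E1) (Ordinal u) uE = exist _ q0 q0_E1 by do 2 apply: val_inj.
  by apply: ord_inj; rewrite ffunE (point16E q0) ?ltn_ord.
- have -> : exist (fun v => v \in E1) (Ordinal u) uE = exist _ q1 q1_E1 by do 2 apply: val_inj.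
  by apply: ord_inj; rewrite ffunE (point16E q1) ?ltn_ord.
- by exfalso; move: uE; rewrite !inE -!val_eqE.
- by [].
Qed.

Lemma point2_bij : bijective (fun p : 'I_2 * 'I_3 => point2 p.1 p.2).
Proof.
exists (fun z : loc2 => (z (exist _ q1 q1_E2) : 'I_2, z (exist _ q2 q2_E2) : 'I_3)).
  move=> [b c]; congr pair; apply: ord_inj; rewrite ffunE.
    by rewrite (point16E q1) ?ltn_ord.
  by rewrite (point16E q2) ?ltn_ord.
move=> z; apply/ffunP => -[[[|[|[|]]] u] uE].
- by exfalso; move: uE; rewrite !inE -!val_eqE.
- have -> : exist (fun v => v \in E2) (Ordinal u) uE = exist _ q1 q1_E2 by do 2 apply: val_inj.
  by apply: ord_inj; rewrite ffunE (point16E q1) ?ltn_ord.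
- have -> : exist (fun v => v \in E2) (Ordinal u) uE = exist _ q2 q2_E2 by do 2 apply: val_inj.
  by apply: ord_inj; rewrite ffunE (point16E q2) ?ltn_ord.
- by [].
Qed.

Lemma card_loc2 : #|{: loc2}| = 6%N.
Proof. by rewrite -(bij_eq_card point2_bij) card_prod !card_ord. Qed.

Section Sums.
Variable R : nmodType.

Lemma sum_point16 (G : full16 -> R) :
  \sum_x G x = \sum_(a < 3) \sum_(b < 2) \sum_(c < 3) G (point16 a b c).
Proof. by rewrite (reindex _ (onW_bij _ point16_bij)) sum_triple. Qed.

Lemma sum_point16_nat (G : full16 -> R) :
  \sum_x G x = \sum_(0 <= a < 3) \sum_(0 <= b < 2) \sum_(0 <= c < 3) G (point16 a b c).
Proof.
rewrite sum_point16 big_mkord; apply: eq_bigr => a _; rewrite big_mkord.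
by apply: eq_bigr => b _; rewrite big_mkord.
Qed.

Lemma sum_point1 (G : loc1 -> R) : \sum_z G z = \sum_(a < 3) \sum_(b < 2) G (point1 a b).
Proof. by rewrite (reindex _ (onW_bij _ point1_bij)) sum_pair. Qed.

Lemma sum_point2 (G : loc2 -> R) : \sum_z G z = \sum_(b < 2) \sum_(c < 3) G (point2 b c).
Proof. by rewrite (reindex _ (onW_bij _ point2_bij)) sum_pair. Qed.

End Sums.

Definition j0 : 'I_2 := @Ordinal 2 0 isT.
Definition j1 : 'I_2 := @Ordinal 2 1 isT.

Lemma gq_H16 (C : numClosedFieldType) (P : gq_choice C inst16) : gq_H P = fun_mx (fun x y : full16 =>
  P j0 (enum_rank (restr1 x)) (enum_rank (restr1 y)) * (x q2 == y q2 :> nat)%:R +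
  P j1 (enum_rank (restr2 x)) (enum_rank (restr2 y)) * (x q0 == y q0 :> nat)%:R).
Proof.
rewrite /gq_H big_ord_recl big_ord1.
have -> : ord0 = j0 by apply: val_inj.
have -> : lift j0 ord0 = j1 by apply: val_inj.
apply/matrixP => i k; rewrite !mxE; congr (_ * _%:R + _ * _%:R); congr (nat_of_bool _); rewrite /gq_edge /=.
- apply/idP/idP => [/forallP/(_ q2) | xy]; first by rewrite !inE.
  apply/forallP => -[[|[|[|]]] //= v]; rewrite (bool_irrelevance v isT) ?inE //.
- apply/idP/idP => [/forallP/(_ q0) | xy]; first by rewrite !inE.
  apply/forallP => -[[|[|[|]]] //= v]; rewrite (bool_irrelevance v isT) ?inE //.
Qed.

Lemma point16_q0 (a : 'I_3) (b : 'I_2) (c : 'I_3) : (point16 a b c q0 : 'I_3) = a.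
Proof. by apply: ord_inj; rewrite (point16E q0) ?ltn_ord. Qed.

Lemma gq16_left_kernel_tensor (C : numClosedFieldType) (P : gq_choice C inst16)
    (alpha : 'I_3 -> C) (psi : loc2 -> C) :
  (forall q : loc2, \sum_p psi p * P j1 (enum_rank p) (enum_rank q) = 0) ->
  (forall (b : 'I_2) (q : loc1), \sum_a alpha a * P j0 (enum_rank (point1 a b)) (enum_rank q) = 0) ->
  forall y, \sum_(x : full16) alpha (x q0 : 'I_3) * psi (restr2 x) * gq_H P (enum_rank x) (enum_rank y) = 0.
Proof.
move=> psiP2 alphaP1 y; rewrite gq_H16.
under eq_bigr do rewrite fun_mxE mulrDr; rewrite big_split /= !sum_point16.
set S1 := (X in X + _); set S2 := (X in _ + X).
have -> : S1 = 0.
  rewrite /S1 exchange_big big1 // => b _; rewrite exchange_big big1 // => c _.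
  transitivity (psi (point2 b c) * (c == y q2 :> nat)%:R *
    \sum_a alpha a * P j0 (enum_rank (point1 a b)) (enum_rank (restr1 y))); last first.
    by rewrite alphaP1 mulr0.
  rewrite big_distrr; apply: eq_bigr => a _ /=.
  rewrite point16_q0 restr_point16_1 ?restr_point16_2 ?ltn_ord //.
  by rewrite (point16E q2) ?ltn_ord //; ring.
have -> : S2 = 0.
  apply: big1 => a _; transitivity (alpha a * (a == y q0 :> nat)%:R *
    \sum_(b < 2) \sum_(c < 3) psi (point2 b c) * P j1 (enum_rank (point2 b c)) (enum_rank (restr2 y))).
    rewrite big_distrr; apply: eq_bigr => b _; rewrite big_distrr; apply: eq_bigr => c _ /=.
    by rewrite point16_q0 restr_point16_2 ?ltn_ord //; ring.
  by rewrite -(sum_point2 (fun p => psi p * P j1 (enum_rank p) _)) psiP2 mulr0.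
by rewrite addr0.
Qed.

Lemma gq16_dim_ker_ge1 (C : numClosedFieldType) (P : gq_choice C inst16) :
  \rank (P j0) = 1%N -> \rank (P j1) = 5%N -> (1 <= dim_ker (gq_H P))%N.
Proof.
move=> rkP1 rkP2; set P1 : 'M[C]_#|{: loc1}| := P j0.
have [psi [p0 psi0] psiP2] := left_kernel_fun_mx
  (f := fun p q : loc2 => P j1 (enum_rank p) (enum_rank q))
  ltac:(by rewrite fun_mx_enum_rank rkP2 card_loc2).
have [alpha [a0 alpha0] alphaP1] := left_kernel_fun_mx_card
  (fun (a : 'I_3) (bk : 'I_2 * 'I_(\rank P1)) => col_base P1 (enum_rank (point1 a bk.1)) bk.2)
  ltac:(by rewrite card_prod !card_ord rkP1).
have P1_col_ker (b : 'I_2) q : \sum_a alpha a * P1 (enum_rank (point1 a b)) q = 0.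
  under eq_bigr do rewrite -{1}(mulmx_base P1) mxE big_distrr.
  rewrite exchange_big /=; apply: big1 => k _.
  transitivity ((\sum_a alpha a * col_base P1 (enum_rank (point1 a b)) k) * row_base P1 k q).
    by rewrite mulr_suml; apply: eq_bigr => a _; rewrite mulrA.
  by rewrite (alphaP1 (b, k)) mul0r.
have [[b0 c0] _ p0E] : exists2 bc : 'I_2 * 'I_3, true & point2 bc.1 bc.2 = p0.
  by case: point2_bij => p _ pK; exists (p p0); rewrite ?pK.
rewrite /dim_ker -[gq_H P]fun_mx_enum_rank subn_gt0.
apply: (rank_fun_mx_lt (a0 := point16 a0 b0 c0)); last first.
  exact: (gq16_left_kernel_tensor psiP2 (fun b q => P1_col_ker b (enum_rank q))).
by rewrite /= point16_q0 restr_point16_2 ?ltn_ord // p0E mulf_neq0.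
Qed.

Definition gq_constant (I : gqsat_instance) (e : {set 'I_(gq_n I)}) (p : gq_loc e) : bool :=
  [forall w, forall w', p w == p w' :> nat].

Lemma constant_point1 a b : (a < 3)%N -> (b < 2)%N -> gq_constant (point1 a b) = (a == b).
Proof.
move=> ha hb; have pE w : point1 a b w = nth 0%N [:: a; b; 0%N] (val w) :> nat.
  by rewrite ffunE point16E.
apply/forallP/eqP => [/(_ (exist _ q0 q0_E1))/forallP/(_ (exist _ q1 q1_E1)) | ab w].
  by rewrite !pE => /eqP.
have nthE (w' : {v | v \in E1}) : nth 0%N [:: a; b; 0%N] (val w') = a.
  by case: w' => -[[|[|[|]]] u] //= uE; move: uE; rewrite !inE -!val_eqE.
by apply/forallP => w'; rewrite !pE !nthE.
Qed.

Lemma constant_point2 b c : (b < 2)%N -> (c < 3)%N -> gq_constant (point2 b c) = (b == c).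
Proof.
move=> hb hc; have pE w : point2 b c w = nth 0%N [:: 0%N; b; c] (val w) :> nat.
  by rewrite ffunE point16E.
apply/forallP/eqP => [/(_ (exist _ q1 q1_E2))/forallP/(_ (exist _ q2 q2_E2)) | bc w].
  by rewrite !pE => /eqP.
have nthE (w' : {v | v \in E2}) : nth 0%N [:: 0%N; b; c] (val w') = b.
  by case: w' => -[[|[|[|]]] u] //= uE; move: uE; rewrite !inE -!val_eqE.
by apply/forallP => w'; rewrite !pE !nthE.
Qed.

Section GQSATWitness.
Variable C : numClosedFieldType.

(* The projector onto the normalised sum of the constant basis states of the qudits of [e];
   on both hyperedges of [inst16] this is |Phi><Phi| with Phi = (|00> + |11>)/sqrt 2. *)
Definition constant_projector (e : {set 'I_3}) : 'M[C]_#|{: gq_loc (I := inst16) e}| :=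
  line_projector (fun p => (gq_constant p)%:R).

Definition witness_choice : gq_choice C inst16 := fun j =>
  if val j == 0%N then constant_projector _ else 1%:M - constant_projector _.

Lemma constant_projector_rank (e : {set 'I_3}) (p : gq_loc (I := inst16) e) :
  gq_constant p -> \rank (constant_projector e) = 1%N.
Proof. by move=> pc; apply: (rank_line_projector (a0 := p)); rewrite pc oner_eq0. Qed.

Lemma witness_choice_valid : gq_valid witness_choice.
Proof.
case=> -[|[|]] // j; rewrite /witness_choice /=; split.
- exact: line_projector_orth.
- by apply: (constant_projector_rank (p := point1 0 0)); rewrite constant_point1.
- exact/orth_projector_compl/line_projector_orth.
- have /andP[/eqP idem _] := line_projector_orth (fun p : loc2 => (gq_constant p)%:R : C).
  rewrite mxrank_compl_idem // (constant_projector_rank (p := point2 0 0)) ?constant_point2 //.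
  by rewrite card_loc2.
Qed.

Lemma constant_norm1 : \sum_(p : loc1) (gq_constant p)%:R * ((gq_constant p)%:R)^* = 2%:R :> C.
Proof.
rewrite sum_point1; under eq_bigr => a _ do under eq_bigr => b _ do
  rewrite constant_point1 ?ltn_ord // conjC_nat -natrM mulnb andbb.
by rewrite !big_ord_recl !big_ord0 /= !(addr0, add0r).
Qed.

Lemma constant_norm2 : \sum_(p : loc2) (gq_constant p)%:R * ((gq_constant p)%:R)^* = 2%:R :> C.
Proof.
rewrite sum_point2; under eq_bigr => b _ do under eq_bigr => c _ do
  rewrite constant_point2 ?ltn_ord // conjC_nat -natrM mulnb andbb.
by rewrite !big_ord_recl !big_ord0 /= !(addr0, add0r).
Qed.

Lemma point2_eq b c b' c' : (b < 2)%N -> (c < 3)%N -> (b' < 2)%N -> (c' < 3)%N ->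
  (point2 b c == point2 b' c') = (b == b') && (c == c').
Proof.
move=> hb hc hb' hc'; apply/eqP/andP => [E | [/eqP -> /eqP ->] //].
have := bij_inj point2_bij (x1 := (Ordinal hb, Ordinal hc)) (x2 := (Ordinal hb', Ordinal hc')) E.
by case=> -> ->.
Qed.

Definition witness_entry (a b c a' b' c' : nat) : C :=
  ((a == b) && (a' == b'))%:R / 2%:R * (c == c')%:R +
  (((b == b') && (c == c'))%:R - ((b == c) && (b' == c'))%:R / 2%:R) * (a == a')%:R.

Lemma gq_H_witness_entry a b c a' b' c' : (a < 3)%N -> (b < 2)%N -> (c < 3)%N ->
    (a' < 3)%N -> (b' < 2)%N -> (c' < 3)%N ->
  gq_H witness_choice (enum_rank (point16 a b c)) (enum_rank (point16 a' b' c')) =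
    witness_entry a b c a' b' c'.
Proof.
move=> ha hb hc ha' hb' hc'.
rewrite gq_H16 fun_mxE /witness_choice /= !restr_point16_1 // !restr_point16_2 //.
rewrite !mxE !enum_rankK (inj_eq enum_rank_inj).
rewrite point2_eq // constant_norm1 constant_norm2 constant_point1 // constant_point1 //.
rewrite constant_point2 // constant_point2 // !conjC_nat -!natrM !mulnb.
by rewrite !(point16E q0) // !(point16E q2) // /witness_entry.
Qed.

Lemma witness_choice_column (g : full16 -> C) :
  (forall y, \sum_x g x * gq_H witness_choice (enum_rank x) (enum_rank y) = 0) ->
  forall a' b' c', (a' < 3)%N -> (b' < 2)%N -> (c' < 3)%N ->
  \sum_(0 <= a < 3) \sum_(0 <= b < 2) \sum_(0 <= c < 3)
    g (point16 a b c) * witness_entry a b c a' b' c' = 0.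
Proof.
move=> H a' b' c' ha' hb' hc'; rewrite -[RHS](H (point16 a' b' c')) sum_point16_nat.
apply: eq_big_nat => a /= ha; apply: eq_big_nat => b /= hb; apply: eq_big_nat => c /= hc.
by rewrite gq_H_witness_entry.
Qed.

Lemma witness_choice_left_kernel (g : full16 -> C) :
  (forall y, \sum_x g x * gq_H witness_choice (enum_rank x) (enum_rank y) = 0) ->
  forall x, g x = g (point16 2 0 0) * ((x q0 == 2 :> nat) && (x q1 == x q2 :> nat))%:R.
Proof.
move/witness_choice_column; rewrite /witness_entry => col.
(* The equations decouple into blocks: eight single unknowns, and the blocks
   {000, 011, 110}, {001, 100, 111}, {002, 112} and {200, 211}. *)
have g010 : g (point16 0 1 0) = 0 by have := col 0 1 0 isT isT isT; expand_sums.
have g012 : g (point16 0 1 2) = 0 by have := col 0 1 2 isT isT isT; expand_sums.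
have g101 : g (point16 1 0 1) = 0 by have := col 1 0 1 isT isT isT; expand_sums.
have g102 : g (point16 1 0 2) = 0 by have := col 1 0 2 isT isT isT; expand_sums.
have g201 : g (point16 2 0 1) = 0 by have := col 2 0 1 isT isT isT; expand_sums.
have g202 : g (point16 2 0 2) = 0 by have := col 2 0 2 isT isT isT; expand_sums.
have g210 : g (point16 2 1 0) = 0 by have := col 2 1 0 isT isT isT; expand_sums.
have g212 : g (point16 2 1 2) = 0 by have := col 2 1 2 isT isT isT; expand_sums.
have [g000 g011 g110] :
    [/\ g (point16 0 0 0) = 0, g (point16 0 1 1) = 0 & g (point16 1 1 0) = 0].
  have := col 0 0 0 isT isT isT; have := col 0 1 1 isT isT isT.
  have := col 1 1 0 isT isT isT; expand_sums.
  set x := g (point16 0 0 0); set y := g (point16 0 1 1); set z := g (point16 1 1 0).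
  move=> E110 E011 E000.
  have yx : y = x.
    by apply/eqP; rewrite -subr_eq0; apply/eqP; rewrite -(mulr0 2%:R) -E011; field.
  have zx : z = - x.
    by apply/eqP; rewrite -subr_eq0 opprK; apply/eqP; rewrite -(mulr0 2%:R) -E000 yx; field.
  have x0 : x = 0 by rewrite -[RHS]oppr0 -E110 zx; field.
  by rewrite yx zx x0 oppr0.
have [g001 g100 g111] :
    [/\ g (point16 0 0 1) = 0, g (point16 1 0 0) = 0 & g (point16 1 1 1) = 0].
  have := col 0 0 1 isT isT isT; have := col 1 0 0 isT isT isT.
  have := col 1 1 1 isT isT isT; expand_sums.
  set x := g (point16 0 0 1); set y := g (point16 1 0 0); set z := g (point16 1 1 1).
  move=> E111 E100 E001.
  have yz : y = z.
    by apply/eqP; rewrite -subr_eq0; apply/eqP; rewrite -(mulr0 2%:R) -E100; field.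
  have zx : z = - x.
    by apply/eqP; rewrite -subr_eq0 opprK; apply/eqP; rewrite -(mulr0 2%:R) -E111 yz; field.
  have x0 : x = 0 by rewrite -[RHS]E001 zx; field.
  by rewrite yz zx x0 oppr0.
have [g002 g112] : g (point16 0 0 2) = 0 /\ g (point16 1 1 2) = 0.
  have := col 0 0 2 isT isT isT; have := col 1 1 2 isT isT isT; expand_sums.
  set x := g (point16 0 0 2); set z := g (point16 1 1 2); move=> E112 E002.
  have xz : x = - (3%:R * z).
    by apply/eqP; rewrite -subr_eq0 opprK; apply/eqP; rewrite -(mulr0 2%:R) -E112; field.
  have z0 : z = 0 by rewrite -(mulr0 (- 4%:R^-1)) -E002 xz; field.
  by rewrite xz z0 mulr0 oppr0.
have g211 : g (point16 2 1 1) = g (point16 2 0 0).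
  have := col 2 0 0 isT isT isT; expand_sums => E200.
  by apply/eqP; rewrite -subr_eq0; apply/eqP; rewrite -(mulr0 (- 2%:R)) -E200; field.
move=> x; case: point16_bij => p _ pK; rewrite -[x]pK; case: (p x) => -[[a ha] [b hb]] [c hc] /=.
rewrite !(point16E q0) // !(point16E q1) // !(point16E q2) //.
by case: a ha => [|[|[|]]] // ?; case: b hb => [|[|]] // ?; case: c hc => [|[|[|]]] // ?;
  rewrite /= ?(mulr1, mulr0, g000, g001, g002, g010, g011, g012, g100, g101, g102,
               g110, g111, g112, g201, g202, g210, g211, g212).
Qed.

Lemma dim_ker_witness_choice : dim_ker (gq_H witness_choice) = 1%N.
Proof.
have [[_ rk1] [_ rk2]] := (witness_choice_valid j0, witness_choice_valid j1).
apply/eqP; rewrite eqn_leq gq16_dim_ker_ge1 // andbT /dim_ker -[gq_H _]fun_mx_enum_rank.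
have := rank_fun_mx_ge (f := fun x y => gq_H witness_choice (enum_rank x) (enum_rank y))
  (w := fun x => ((x q0 == 2 :> nat) && (x q1 == x q2 :> nat))%:R)
  (fun g gH => ex_intro _ (g (point16 2 0 0)) (witness_choice_left_kernel gH)).
by rewrite leq_subLR addnC -leq_subLR.
Qed.

End GQSATWitness.

Local Close Scope ring_scope.

Theorem mainTheorem16 (C : numClosedFieldType) :
  GQSAT_is C inst16 1 /\
  template_wf G16 /\ QMC_is G16 15 /\ QMF_is G16 C 14.
Proof.
split; [split | split; [exact: G16_wf | split; [exact: G16_min_cut | split]]].
- by exists (witness_choice C); split; [exact: witness_choice_valid | exact: dim_ker_witness_choice].
- by move=> P PV; have [[_ rk1] [_ rk2]] := (PV j0, PV j1); apply: gq16_dim_ker_ge1.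
- by exists (witness_tensor C); exact: rank_beta16_witness_tensor.
- exact: rank_beta16_le.
Qed.
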